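(* Let $(R,[\cdot_\lambda\cdot],\alpha,\beta)$ be a finitely generated BiHom-Lie conformal superalgebra, let $k,l,s,t\ge0$ be integers, and let $f\in\mathrm{QC}_{\alpha^k\beta^l}(R)$ and $g\in\mathrm{QC}_{\alpha^s\beta^t}(R)$ be homogeneous. Then $[f_\lambda g]$, given by $[f_\lambda g]_\theta=f_\lambda g_{\theta-\lambda}-(-1)^{|f||g|}g_{\theta-\lambda}f_\lambda$, is an $\alpha^{k+s}\beta^{l+t}$-generalized derivation of degree $|f|+|g|$ (coefficientwise in $\lambda$).
   Context: All spaces are over $\mathbb{C}$. For a $\mathbb{C}[\partial]$-module $V$, $V[\lambda]=\mathbb{C}[\lambda]\otimes V$. $|a|$ denotes the parity of a homogeneous element. Substitution $\lambda\mapsto-\lambda-\partial$ means: expand in powers of $\lambda$ and replace $\lambda$ by $-\lambda-\partial$, $\partial$ acting on the coefficients. A BiHom-Lie conformal superalgebra $(R,[\cdot_\lambda\cdot],\alpha,\beta)$ is a $\mathbb{Z}_2$-graded $\mathbb{C}[\partial]$-module $R$ with two commuting linear maps $\alpha,\beta$ and a $\mathbb{C}$-linear map $R\otimes R\to R[\lambda]$, $a\otimes b\mapsto[a_\lambda b]$, with $[R_{i\,\lambda}R_j]\subseteq R_{i+j}[\lambda]$, such that for all homogeneous $a,b,c$: (1) $\alpha\partial=\partial\alpha$, $\beta\partial=\partial\beta$; (2) $\alpha([a_\lambda b])=[\alpha(a)_\lambda\alpha(b)]$, $\beta([a_\lambda b])=[\beta(a)_\lambda\beta(b)]$; (3) $[(\partial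 a)_\lambda b]=-\lambda[a_\lambda b]$, $[a_\lambda(\partial b)]=(\partial+\lambda)[a_\lambda b]$; (4) $[\beta(a)_\lambda\alpha(b)]=-(-1)^{|a||b|}[\beta(b)_{-\lambda-\partial}\alpha(a)]$; (5) $[\alpha\beta(a)_\lambda[b_\mu c]]=[[\beta(a)_\lambda b]_{\lambda+\mu}\beta(c)]+(-1)^{|a||b|}[\beta(b)_\mu[\alpha(a)_\lambda c]]$. $gc(R)$ is the $\mathbb{Z}_2$-graded space of conformal linear maps $f$ (families $f_\lambda:R\to R[\lambda]$ with $f_\lambda\partial=(\partial+\lambda)f_\lambda$, $f_\lambda(R_\theta)\subseteq R_{\theta+|f|}[\lambda]$), and $\Omega=\{f\in gc(R): f_\lambda\alpha=\alpha f_\lambda,\ f_\lambda\beta=\beta f_\lambda\}$. For integers $k,l\ge0$, a homogeneous $f\in\Omega$ is an $\alpha^k\beta^l$-quasicentroid if $[f_\lambda(a)_{\lambda+\mu}\alpha^k\beta^l(b)]=(-1)^{|f||a|}[\alpha^k\beta^l(a)_\mu f_\lambda(b)]$ for all homogeneous $a,b\in R$; $\mathrm{QC}_{\alpha^k\beta^l}(R)$ is their span. A homogeneous $h\in\Omega$ is an $\alpha^k\beta^l$-generalized derivation if there exist $h',h''\in\Omega$ with $|h'|=|h''|=|h|$ and $[h_\lambda(a)_{\lambda+\mu}\alpha^k\beta^l(b)]+(-1)^{|h||a|}[\alpha^k\beta^l(a)_\mu h'_\lambda(b)]=h''_\lambda([a_\mu b])$ for all homogeneous $a,b\in R$. *)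

From HB Require Import structures.
From mathcomp Require Import all_boot all_algebra.
From mathcomp Require Import reals complex.
Set Implicit Arguments. Unset Strict Implicit. Unset Printing Implicit Defensive.
Import GRing.Theory.
Local Open Scope ring_scope.

(* Conventions.
   * Parity: elements of Z_2 are booleans (false = even, true = odd);
     the sum of parities is [addb].
   * A polynomial in one variable with coefficients in V (an element of V[lambda])
     is represented by the list of its coefficients [s : seq V]
     (s`_n = coefficient of lambda^n).  Polynomial identities (in lambda, mu, theta)
     are stated after evaluation at arbitrary scalars of the (infinite) base field,
     which is equivalent to the formal identities. *)

Section BiHomDefs.
Variables (C : fieldType) (V : lmodType C).

Definition ev (s : seq V) (x : C) : V := \sum_(i < size s) (x ^+ i) *: s`_i.

(* evaluation of s(lambda) after the substitution lambda |-> -lambda - d, at lambda := x: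
   sum_n (-x - d)^n (s_n) *)
Definition ev_subst (d : V -> V) (s : seq V) (x : C) : V :=
  \sum_(i < size s) iter i (fun v => - (x *: v) - d v) s`_i.

Definition sgn (b : bool) : C := (-1) ^+ b.

Definition linmap (h : V -> V) : Prop := forall c u v, h (c *: u + v) = c *: h u + h v.

(* par p v : v is homogeneous of parity p; V = V_0 (+) V_1 as C-vector spaces *)
Definition graded (par : bool -> V -> Prop) : Prop :=
  [/\ forall p, par p 0,
      forall p c u v, par p u -> par p v -> par p (c *: u + v),
      forall v, par false v -> par true v -> v = 0
    & forall v, exists v0 v1, [/\ par false v0, par true v1 & v = v0 + v1]].

Definition even_map (par : bool -> V -> Prop) (h : V -> V) : Prop :=
  linmap h /\ forall p v, par p v -> par p (h v).

Definition poly_act (d : V -> V) (p : {poly C}) (v : V) : V :=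
  \sum_(i < size p) p`_i *: iter i d v.

Definition fin_gen (d : V -> V) : Prop :=
  exists gens : seq V, forall v, exists ps : nat -> {poly C},
    v = \sum_(i < size gens) poly_act d (ps i) gens`_i.

(* BiHom-Lie conformal superalgebra (R = V, d = partial, [a_lambda b] = br a b) *)
Record isBiHomLCSA (d alpha beta : V -> V) (par : bool -> V -> Prop)
    (br : V -> V -> seq V) : Prop := {
  bh_graded : graded par;
  bh_d : even_map par d;
  bh_alpha : even_map par alpha;
  bh_beta : even_map par beta;
  bh_ab : forall v, alpha (beta v) = beta (alpha v);
  bh_brl : forall c a a' b x,
     ev (br (c *: a + a') b) x = c *: ev (br a b) x + ev (br a' b) x;
  bh_brr : forall c a b b' x,
     ev (br a (c *: b + b')) x = c *: ev (br a b) x + ev (br a b') x;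
  bh_brpar : forall i j a b n, par i a -> par j b -> par (addb i j) (br a b)`_n;
  bh_alpha_d : forall v, alpha (d v) = d (alpha v);
  bh_beta_d : forall v, beta (d v) = d (beta v);
  bh_alpha_br : forall a b x, alpha (ev (br a b) x) = ev (br (alpha a) (alpha b)) x;
  bh_beta_br : forall a b x, beta (ev (br a b) x) = ev (br (beta a) (beta b)) x;
  bh_dl : forall a b x, ev (br (d a) b) x = - (x *: ev (br a b) x);
  bh_dr : forall a b x, ev (br a (d b)) x = d (ev (br a b) x) + x *: ev (br a b) x;
  bh_skew : forall pa pb a b x, par pa a -> par pb b ->
     ev (br (beta a) (alpha b)) x
       = - (sgn (pa && pb) *: ev_subst d (br (beta b) (alpha a)) x);
  bh_jacobi : forall pa pb a b c x y, par pa a -> par pb b ->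
     ev (br (alpha (beta a)) (ev (br b c) y)) x
       = ev (br (ev (br (beta a) b) x) (beta c)) (x + y)
         + sgn (pa && pb) *: ev (br (beta b) (ev (br (alpha a) c) x)) y
}.

Definition conf_lin (d : V -> V) (par : bool -> V -> Prop) (p : bool)
    (f : V -> seq V) : Prop :=
  [/\ forall c a b x, ev (f (c *: a + b)) x = c *: ev (f a) x + ev (f b) x,
      forall a x, ev (f (d a)) x = d (ev (f a) x) + x *: ev (f a) x
    & forall q a n, par q a -> par (addb q p) (f a)`_n].

Definition commutes_ab (alpha beta : V -> V) (f : V -> seq V) : Prop :=
  forall a x, ev (f (alpha a)) x = alpha (ev (f a) x)
           /\ ev (f (beta a)) x = beta (ev (f a) x).

Definition in_Omega d alpha beta par p f : Prop :=
  conf_lin d par p f /\ commutes_ab alpha beta f.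

Definition abpow (alpha beta : V -> V) (k l : nat) (v : V) : V :=
  iter k alpha (iter l beta v).

Definition quasicentroid d alpha beta par br (k l : nat) (p : bool)
    (f : V -> seq V) : Prop :=
  in_Omega d alpha beta par p f /\
  forall pa pb a b x y, par pa a -> par pb b ->
    ev (br (ev (f a) x) (abpow alpha beta k l b)) (x + y)
      = sgn (p && pa) *: ev (br (abpow alpha beta k l a) (ev (f b) x)) y.

Definition gen_der d alpha beta par br (k l : nat) (p : bool)
    (h : V -> seq V) : Prop :=
  in_Omega d alpha beta par p h /\
  exists h' h'' : V -> seq V,
    [/\ in_Omega d alpha beta par p h', in_Omega d alpha beta par p h''
      & forall pa pb a b x y, par pa a -> par pb b ->
        ev (br (ev (h a) x) (abpow alpha beta k l b)) (x + y)
          + sgn (p && pa) *: ev (br (abpow alpha beta k l a) (ev (h' b) x)) y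
        = ev (h'' (ev (br a b) y)) x].

(* value of [f_lambda g]_theta (a) at lambda := x, theta := y:
   f_lambda g_{theta - lambda} (a) - (-1)^{|f||g|} g_{theta-lambda} f_lambda (a) *)
Definition gc_br_ev (pf pg : bool) (f g : V -> seq V) (a : V) (x y : C) : V :=
  ev (f (ev (g a) (y - x))) x - sgn (pf && pg) *: ev (g (ev (f a) x)) (y - x).

End BiHomDefs.

From HB Require Import structures.
From mathcomp Require Import all_boot all_algebra.
From mathcomp Require Import reals complex.
From mathcomp Require Import boolp.
Set Implicit Arguments.
Unset Strict Implicit.
Unset Printing Implicit Defensive.
Import GRing.Theory Num.Theory.
Local Open Scope ring_scope.
Local Open Scope complex_scope.

(* [f_lambda g] satisfies the anti-quasicentroid identity
     [[f_lambda g]_theta(a)_(theta+mu) b'] = -(-1)^(|[f,g]||a|) [a'_mu [f_lambda g]_theta(b)]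
   (a' = alpha^(k+s) beta^(l+t) a, and similarly b'): moving first f and then g
   across the bracket turns f g (a) into g f (b) and g f (a) into f g (b) with the
   same sign, so the two terms of the commutator trade places.  Hence every
   lambda-coefficient of [f_lambda g] is a generalized derivation with h' = h and
   h'' = 0.  The coefficients are extracted by inverting a Vandermonde matrix at
   lambda = 0, ..., N - 1; a uniform bound N on the lambda-degree exists because
   R is finitely generated and d does not raise that degree. *)

Section LinearMaps.
Context {C : fieldType} {V : lmodType C}.

Section OneMap.
Context {h : V -> V} (hlin : linmap h).

Lemma linmapD u v : h (u + v) = h u + h v.
Proof. by have := hlin 1 u v; rewrite !scale1r. Qed.

Lemma linmap0 : h 0 = 0.
Proof. by apply: (addrI (h 0)); rewrite -linmapD !addr0. Qed.

Lemma linmapZ c u : h (c *: u) = c *: h u.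
Proof. by have := hlin c u 0; rewrite !addr0 linmap0 addr0. Qed.

Lemma linmapB u v : h (u - v) = h u - h v.
Proof. by rewrite linmapD -scaleN1r linmapZ scaleN1r. Qed.

Lemma linmap_sum n (F : 'I_n -> V) : h (\sum_(i < n) F i) = \sum_(i < n) h (F i).
Proof.
apply: (big_rec2 (fun a b => h a = b)); first exact: linmap0.
by move=> i a b _ <-; rewrite linmapD.
Qed.

End OneMap.

Lemma linmap_comp (h1 h2 : V -> V) :
  linmap h1 -> linmap h2 -> linmap (fun a => h1 (h2 a)).
Proof. by move=> H1 H2 c u v; rewrite H2 H1. Qed.

Lemma linmap_subZ (h1 h2 : V -> V) e :
  linmap h1 -> linmap h2 -> linmap (fun a => h1 a - e *: h2 a).
Proof.
move=> H1 H2 c u v; rewrite H1 H2 scalerDr scalerBr !scalerA mulrC -scalerA.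
by rewrite opprD addrACA -scalerBr.
Qed.

Definition lin_closed (Q : V -> Prop) :=
  Q 0 /\ forall c u v, Q u -> Q v -> Q (c *: u + v).

Section LinClosed.
Context {Q : V -> Prop} (HQ : lin_closed Q).

Lemma lin_closedZ c u : Q u -> Q (c *: u).
Proof. by move=> Qu; have := HQ.2 c u 0 Qu HQ.1; rewrite addr0. Qed.

Lemma lin_closedD u v : Q u -> Q v -> Q (u + v).
Proof. by move=> Qu Qv; have := HQ.2 1 u v Qu Qv; rewrite scale1r. Qed.

Lemma lin_closed_sum n (F : 'I_n -> V) : (forall i, Q (F i)) -> Q (\sum_(i < n) F i).
Proof. by move=> QF; elim/big_ind: _ => //; [exact: HQ.1 | exact: lin_closedD]. Qed.

End LinClosed.

End LinearMaps.

Section PolynomialFunctions.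
Context {C : fieldType} {V : lmodType C}.

Definition polyfun N (p : C -> V) :=
  exists w : nat -> V, forall x, p x = \sum_(i < N) x ^+ i *: w i.

Definition is_polyfun (p : C -> V) := exists N, polyfun N p.

Lemma polyfun_eq N p q : polyfun N p -> p =1 q -> polyfun N q.
Proof. by move=> [w Hw] E; exists w => x; rewrite -E Hw. Qed.

Lemma polyfunW N M p : (N <= M)%N -> polyfun N p -> polyfun M p.
Proof.
move=> le [w Hw]; exists (fun i => if (i < N)%N then w i else 0) => x.
rewrite Hw (big_ord_widen M (fun i => x ^+ i *: w i) le) big_mkcond.
by apply: eq_bigr => i _; case: ifP; rewrite ?scaler0.
Qed.

Lemma polyfun_cst v : polyfun 1 (fun _ => v).
Proof. by exists (fun _ => v) => x; rewrite big_ord1 expr0 scale1r. Qed.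

Lemma polyfun0 N : polyfun N (fun _ => 0).
Proof. by exists (fun _ => 0) => x; rewrite big1 // => i _; rewrite scaler0. Qed.

Lemma polyfunD N p q : polyfun N p -> polyfun N q -> polyfun N (fun x => p x + q x).
Proof.
move=> [w Hw] [w' Hw']; exists (fun i => w i + w' i) => x.
by rewrite Hw Hw' -big_split; apply: eq_bigr => i _; rewrite scalerDr.
Qed.

Lemma polyfun_linmap N p h : linmap h -> polyfun N p -> polyfun N (fun x => h (p x)).
Proof.
move=> hlin [w Hw]; exists (fun i => h (w i)) => x.
by rewrite Hw linmap_sum //; apply: eq_bigr => i _; rewrite linmapZ.
Qed.

Lemma polyfunZ N p c : polyfun N p -> polyfun N (fun x => c *: p x).
Proof. by apply: polyfun_linmap => e u v; rewrite scalerDr !scalerA mulrC. Qed.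

Lemma polyfun_sum N n (F : 'I_n -> C -> V) :
  (forall i, polyfun N (F i)) -> polyfun N (fun x => \sum_(i < n) F i x).
Proof.
elim: n F => [|n IHn] F HF.
  by apply: polyfun_eq (polyfun0 N) _ => x; rewrite big_ord0.
apply: polyfun_eq (polyfunD (IHn _ (fun i => HF (widen_ord (leqnSn n) i))) (HF ord_max)) _.
by move=> x; rewrite big_ord_recr.
Qed.

Lemma ev_nil x : ev ([::] : seq V) x = 0.
Proof. by rewrite /ev big_ord0. Qed.

Lemma polyfun_ev (s : seq V) : polyfun (size s) (ev s).
Proof. by exists (nth 0 s). Qed.

Lemma polyfun_mulX N p : polyfun N p -> polyfun N.+1 (fun x => x *: p x).
Proof.
move=> [w Hw]; exists (fun i => if i is i'.+1 then w i' else 0) => x.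
rewrite big_ord_recl scaler0 add0r Hw scaler_sumr.
by apply: eq_bigr => i _; rewrite scalerA exprS.
Qed.

Lemma polyfun_mul_affine N p b0 b1 :
  polyfun N p -> polyfun N.+1 (fun x => (b0 + b1 * x) *: p x).
Proof.
move=> Hp; apply: polyfun_eq
  (polyfunD (polyfunW (leqnSn N) (polyfunZ b0 Hp)) (polyfun_mulX (polyfunZ b1 Hp))) _.
by move=> x; rewrite scalerDl scalerA mulrC.
Qed.

Lemma polyfun_mul_affineX N p b0 b1 i :
  polyfun N p -> polyfun (N + i) (fun x => (b0 + b1 * x) ^+ i *: p x).
Proof.
move=> Hp; elim: i => [|i IHi].
  by apply: polyfun_eq (polyfunW (leq_addr _ _) Hp) _ => x; rewrite expr0 scale1r.
rewrite addnS; apply: polyfun_eq (polyfun_mul_affine b0 b1 IHi) _ => x.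
by rewrite scalerA exprS.
Qed.

Lemma polyfun_comp_affine N p b0 b1 :
  polyfun N p -> polyfun N (fun x => p (b0 + b1 * x)).
Proof.
move=> [w Hw]; apply: polyfun_eq (polyfun_sum (fun i : 'I_N => _)) _; last first.
  by move=> x; rewrite Hw.
move=> i; apply: polyfunW (polyfun_mul_affineX b0 b1 i (polyfun_cst (w i))).
by rewrite add1n ltn_ord.
Qed.

Lemma ex_common_bound (I : finType) (P : I -> nat -> Prop) :
  (forall i N M, (N <= M)%N -> P i N -> P i M) ->
  (forall i, exists N, P i N) -> exists N, forall i, P i N.
Proof.
move=> Pmono /fin_all_exists[b Pb]; exists (\max_i b i) => i.
exact: Pmono i (b i) _ (leq_bigmax i) (Pb i).
Qed.

Lemma is_polyfunZ p c : is_polyfun p -> is_polyfun (fun x => c *: p x).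
Proof. by move=> [N Hp]; exists N; apply: polyfunZ. Qed.

Lemma is_polyfun_sum n (F : 'I_n -> C -> V) :
  (forall i, is_polyfun (F i)) -> is_polyfun (fun x => \sum_(i < n) F i x).
Proof.
move=> /(ex_common_bound (fun i N M le => @polyfunW N M (F i) le))[N HN].
by exists N; apply: polyfun_sum.
Qed.

Lemma polyfun_ev_comp (h : V -> seq V) (s : seq V) :
  (forall z, linmap (fun a => ev (h a) z)) ->
  exists N, forall b0 b1 c0 c1,
    polyfun N (fun x => ev (h (ev s (b0 + b1 * x))) (c0 + c1 * x)).
Proof.
move=> hlin.
have [N HN] : exists N, forall (i : 'I_(size s)) b0 b1 c0 c1,
    polyfun N (fun x => (b0 + b1 * x) ^+ i *: ev (h s`_i) (c0 + c1 * x)).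
  apply: ex_common_bound => [i N M le HN b0 b1 c0 c1|i].
    exact: polyfunW le (HN b0 b1 c0 c1).
  exists (size (h s`_i) + i) => b0 b1 c0 c1.
  exact/polyfun_mul_affineX/polyfun_comp_affine/polyfun_ev.
exists N => b0 b1 c0 c1; apply: polyfun_eq (polyfun_sum (fun i => HN i b0 b1 c0 c1)) _ => x.
rewrite [ev s _]/ev (linmap_sum (hlin _)).
by apply: eq_bigr => i _; rewrite (linmapZ (hlin _)).
Qed.

End PolynomialFunctions.

Section Interpolation.
Context {C : numFieldType} {V : lmodType C}.

Definition nat_points N : 'rV[C]_N := \row_(j < N) j%:R.

Lemma nat_vandermonde_unit N : Vandermonde N (nat_points N) \in unitmx.
Proof.
rewrite unitmxE det_Vandermonde unitfE; apply/prodf_neq0 => i _.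
by apply/prodf_neq0 => j ij; rewrite !mxE subr_eq0 eqr_nat gtn_eqF.
Qed.

(* The inner sum is the entry of the inverse Vandermonde matrix in column [i],
   and is [0] when [N <= i]. *)
Definition interp_coef N (p : C -> V) (i : nat) : V :=
  \sum_(j < N) (\sum_(k < N | k == i :> nat) invmx (Vandermonde N (nat_points N)) j k)
                 *: p j%:R.

Lemma polyfun_interp N p x :
  polyfun N p -> p x = \sum_(i < N) x ^+ i *: interp_coef N p i.
Proof.
move=> [w Hw]; rewrite Hw; apply: eq_bigr => i _; congr (_ *: _).
set W := Vandermonde N (nat_points N).
have mulmx_entry (k : 'I_N) :
    \sum_(j < N) invmx W j i *: ((j%:R : C) ^+ k *: w k) = (W *m invmx W) k i *: w k.
  rewrite mxE scaler_suml; apply: eq_bigr => j _.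
  by rewrite scalerA mulrC /W /Vandermonde !mxE.
rewrite /interp_coef.
under eq_bigr => j _ do rewrite (big_pred1 i) ?val_eqE // Hw scaler_sumr.
rewrite exchange_big /=.
under eq_bigr => k _ do rewrite mulmx_entry.
rewrite mulmxV ?nat_vandermonde_unit // (bigD1 i) //= big1 => [|k nki].
  by rewrite mxE eqxx scale1r addr0.
by rewrite mxE (negbTE nki) scale0r.
Qed.

Lemma interp_coef_eq N p q i : p =1 q -> interp_coef N p i = interp_coef N q i.
Proof. by move=> E; apply: eq_bigr => j _; rewrite E. Qed.

Lemma interp_coef_eq0 N p i : p =1 (fun _ => 0) -> interp_coef N p i = 0.
Proof. by move=> E; rewrite /interp_coef big1 // => j _; rewrite E scaler0. Qed.

Lemma interp_coefZD N c p q i :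
  interp_coef N (fun x => c *: p x + q x) i = c *: interp_coef N p i + interp_coef N q i.
Proof.
rewrite /interp_coef scaler_sumr -big_split; apply: eq_bigr => j _.
by rewrite scalerDr !scalerA mulrC.
Qed.

Lemma interp_coef_linmap N h p i :
  linmap h -> interp_coef N (fun x => h (p x)) i = h (interp_coef N p i).
Proof.
by move=> hlin; rewrite /interp_coef linmap_sum //; apply: eq_bigr => j _; rewrite linmapZ.
Qed.

Lemma interp_coef_closed N Q p i :
  lin_closed Q -> (forall x, Q (p x)) -> Q (interp_coef N p i).
Proof. by move=> HQ Qp; apply: lin_closed_sum => // j; apply: lin_closedZ. Qed.

Lemma is_polyfun_interp_coef N (P : C -> C -> V) i :
  (forall x, is_polyfun (P x)) -> is_polyfun (fun y => interp_coef N (P^~ y) i).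
Proof. by move=> HP; apply: is_polyfun_sum => j; apply: is_polyfunZ. Qed.

(* Defined by interpolation rather than by choosing any [s] with [ev s =1 p], so
   that the coefficients are combinations of values of [p] (see [coef_seq_closed]). *)
Definition coef_seq (p : C -> V) : seq V :=
  if pselect (is_polyfun p) is left ex then
    let N := sval (cid ex) in mkseq (interp_coef N p) N
  else [::].

Lemma ev_coef_seq p : is_polyfun p -> ev (coef_seq p) =1 p.
Proof.
rewrite /coef_seq => ex y; case: pselect => // {}ex; case: (cid ex) => N HN /=.
by rewrite (polyfun_interp y HN) /ev size_mkseq; apply: eq_bigr => i _; rewrite nth_mkseq.
Qed.

Lemma coef_seq_closed Q p n :
  lin_closed Q -> (forall y, Q (p y)) -> Q (coef_seq p)`_n.
Proof.
rewrite /coef_seq => HQ Qp; case: pselect => [ex|_]; last by rewrite nth_nil; exact: HQ.1.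
case: (cid ex) => N _ /=; case: (ltnP n N) => nN.
  by rewrite nth_mkseq //; apply: interp_coef_closed.
by rewrite nth_default ?size_mkseq //; exact: HQ.1.
Qed.

End Interpolation.

Section Graded.
Context {C : fieldType} {V : lmodType C} {par : bool -> V -> Prop} (Hgr : graded par).

Lemma lin_closed_par p : lin_closed (par p).
Proof. by case: Hgr => par0 parZD _ _; split; [exact: par0 | exact: parZD]. Qed.

Lemma par_ev q (s : seq V) x : (forall n, par q s`_n) -> par q (ev s x).
Proof.
move=> Hs; rewrite /ev; apply: (lin_closed_sum (lin_closed_par q)) => i.
exact: (lin_closedZ (lin_closed_par q)).
Qed.

End Graded.

Section Omega.
Context {C : numFieldType} {V : lmodType C}.
Variables (d alpha beta : V -> V) (par : bool -> V -> Prop).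
Hypotheses (Hgr : graded par) (Hd : linmap d).
Hypotheses (Halpha : even_map par alpha) (Hbeta : even_map par beta).
Hypothesis Hab : forall v, alpha (beta v) = beta (alpha v).

(* [F a y] is the value at lambda = [y] of an element of Omega applied to [a]. *)
Record in_Omega_ev (p : bool) (F : V -> C -> V) : Prop := InOmegaEv {
  omega_lin : forall y, linmap (F^~ y);
  omega_d : forall a y, F (d a) y = d (F a y) + y *: F a y;
  omega_alpha : forall a y, F (alpha a) y = alpha (F a y);
  omega_beta : forall a y, F (beta a) y = beta (F a y);
  omega_par : forall q a y, par q a -> par (addb q p) (F a y)
}.

Lemma in_Omega_ev_of p h :
  in_Omega d alpha beta par p h -> in_Omega_ev p (fun a => ev (h a)).
Proof.
move=> [[hlin hd hpar] hab]; split=> // [y c u v|a y|a y|q a y Ha].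
- exact: hlin.
- exact: (hab a y).1.
- exact: (hab a y).2.
- by apply: (par_ev Hgr) => n; apply: hpar.
Qed.

Lemma in_Omega_ev_comp pf pg F G (u v : C -> C) :
  (forall y, u y + v y = y) -> in_Omega_ev pf F -> in_Omega_ev pg G ->
  in_Omega_ev (addb pf pg) (fun a y => F (G a (u y)) (v y)).
Proof.
move=> uv HF HG; split=> [y|a y|a y|a y|q a y Ha].
- exact: linmap_comp (omega_lin HF _) (omega_lin HG _).
- rewrite (omega_d HG) (linmapD (omega_lin HF _)) (linmapZ (omega_lin HF _)).
  by rewrite (omega_d HF) -addrA -scalerDl (addrC (v y)) uv.
- by rewrite (omega_alpha HG) (omega_alpha HF).
- by rewrite (omega_beta HG) (omega_beta HF).
- by rewrite (addbC pf) addbA; apply/(omega_par HF)/(omega_par HG).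
Qed.

Lemma in_Omega_ev_subZ p F1 F2 c :
  in_Omega_ev p F1 -> in_Omega_ev p F2 ->
  in_Omega_ev p (fun a y => F1 a y - c *: F2 a y).
Proof.
have lin_sub h u1 u2 : linmap h -> h (u1 - c *: u2) = h u1 - c *: h u2.
  by move=> hlin; rewrite (linmapB hlin) (linmapZ hlin).
move=> H1 H2; split=> [y|a y|a y|a y|q a y Ha].
- exact: linmap_subZ (omega_lin H1 y) (omega_lin H2 y).
- rewrite (omega_d H1) (omega_d H2) lin_sub // scalerBr scalerDr !scalerA mulrC.
  by rewrite opprD addrACA.
- by rewrite (omega_alpha H1) (omega_alpha H2) lin_sub //; case: Halpha.
- by rewrite (omega_beta H1) (omega_beta H2) lin_sub //; case: Hbeta.
- rewrite addrC -scaleNr; apply: (lin_closed_par Hgr _).2.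
    exact: (omega_par H2).
  exact: (omega_par H1).
Qed.

Lemma in_Omega_ev_gc_br pf pg f g x :
  in_Omega d alpha beta par pf f -> in_Omega d alpha beta par pg g ->
  in_Omega_ev (addb pf pg) (fun a y => gc_br_ev pf pg f g a x y).
Proof.
move=> /in_Omega_ev_of Hf /in_Omega_ev_of Hg; apply: in_Omega_ev_subZ.
  by apply: in_Omega_ev_comp Hf Hg => y; rewrite subrK.
by rewrite addbC; apply: in_Omega_ev_comp Hg Hf => y; rewrite addrC subrK.
Qed.

Lemma in_Omega_nil p : in_Omega d alpha beta par p (fun _ => [::]).
Proof.
split; first split.
- by move=> c a b x; rewrite !ev_nil scaler0 addr0.
- by move=> a x; rewrite !ev_nil (linmap0 Hd) scaler0 addr0.
- by move=> q a n _; rewrite nth_nil; exact: (lin_closed_par Hgr _).1.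
- by move=> a x; rewrite !ev_nil (linmap0 Halpha.1) (linmap0 Hbeta.1).
Qed.

Local Notation A := (abpow alpha beta).

Lemma abpow_comp k l s t v : A s t (A k l v) = A (k + s) (l + t) v.
Proof.
have alpha_iter_beta n w : alpha (iter n beta w) = iter n beta (alpha w).
  by elim: n => //= n <-; rewrite Hab.
have iter_alpha_beta m n w : iter m alpha (iter n beta w) = iter n beta (iter m alpha w).
  by elim: m => //= m ->; rewrite alpha_iter_beta.
by rewrite /abpow -(iter_alpha_beta k t) -!iterD (addnC s k) (addnC t l).
Qed.

Lemma abpow_par k l q v : par q v -> par q (A k l v).
Proof.
move=> Hv; rewrite /abpow; elim: k => [|k IHk] /=; last by case: Halpha => _; apply.
by elim: l => //= l IHl; case: Hbeta => _; apply.
Qed.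

Lemma in_Omega_abpow p h k l a x :
  in_Omega d alpha beta par p h -> ev (h (A k l a)) x = A k l (ev (h a) x).
Proof.
case=> _ hab; rewrite /abpow; elim: k => [|k IHk] /=; last by rewrite (hab _ x).1 IHk.
by elim: l => //= l IHl; rewrite (hab _ x).2 IHl.
Qed.

Section CoefficientMaps.
Variables (p : bool) (P : C -> V -> C -> V).
Hypothesis HP : forall x, in_Omega_ev p (P x).

Lemma fin_gen_polyfun_bound :
  fin_gen d -> (forall v, exists N, forall y, polyfun N (fun x => P x v y)) ->
  exists N, forall a y, polyfun N (fun x => P x a y).
Proof.
move=> [gens Hgens] Hgen.
have [N HN] : exists N, forall i : 'I_(size gens), forall y, polyfun N (fun x => P x gens`_i y).
  apply: ex_common_bound => [i N M le HN y|i]; [exact: polyfunW le (HN y) | exact: Hgen].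
have HNd v m : (forall y, polyfun N (fun x => P x v y)) ->
    forall y, polyfun N (fun x => P x (iter m d v) y).
  move=> Hv; elim: m => // m IHm y /=.
  apply: polyfun_eq (polyfunD (polyfun_linmap Hd (IHm y)) (polyfunZ y (IHm y))) _.
  by move=> x; rewrite (omega_d (HP x)).
exists N => a y; have [ps ->] := Hgens a.
apply: polyfun_eq (polyfun_sum (fun i => polyfun_sum (fun m : 'I_(size (ps i)) =>
  polyfunZ (ps i)`_m (HNd _ m (HN i) y)))) _ => x.
rewrite (linmap_sum (omega_lin (HP x) y)); apply: eq_bigr => i _.
rewrite /poly_act (linmap_sum (omega_lin (HP x) y)); apply: eq_bigr => m _.
by rewrite (linmapZ (omega_lin (HP x) y)).
Qed.

Hypothesis HPy : forall x a, is_polyfun (P x a).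

Definition coef_map N i a : seq V := coef_seq (fun y => interp_coef N (fun x => P x a y) i).

Lemma ev_coef_map N i a y : ev (coef_map N i a) y = interp_coef N (fun x => P x a y) i.
Proof. exact/ev_coef_seq/is_polyfun_interp_coef. Qed.

Lemma polyfun_coef_map N a x y :
  (forall a y, polyfun N (fun x => P x a y)) ->
  P x a y = \sum_(i < N) x ^+ i *: ev (coef_map N i a) y.
Proof.
by move=> HN; rewrite (polyfun_interp x (HN a y)); apply: eq_bigr => i _; rewrite ev_coef_map.
Qed.

Lemma in_Omega_coef_map N i : in_Omega d alpha beta par p (coef_map N i).
Proof.
split; first split.
- move=> c a b y; rewrite !ev_coef_map -interp_coefZD.
  by apply: interp_coef_eq => x; apply: (omega_lin (HP x)).
- move=> a y; rewrite !ev_coef_map -(interp_coef_linmap _ _ _ Hd) addrC -interp_coefZD.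
  by apply: interp_coef_eq => x; rewrite (omega_d (HP x)) addrC.
- move=> q a n Ha; apply: coef_seq_closed (lin_closed_par Hgr _) _ => y.
  apply: interp_coef_closed (lin_closed_par Hgr _) _ => x.
  exact: (omega_par (HP x)).
- move=> a y; rewrite !ev_coef_map -(interp_coef_linmap _ _ _ Halpha.1).
  rewrite -(interp_coef_linmap _ _ _ Hbeta.1); split; apply: interp_coef_eq => x.
    exact: (omega_alpha (HP x)).
  exact: (omega_beta (HP x)).
Qed.

End CoefficientMaps.

Section Quasicentroids.
Variable br : V -> V -> seq V.
Hypothesis Hbrl : forall z y, linmap (fun u => ev (br u z) y).
Hypothesis Hbrr : forall z y, linmap (fun u => ev (br z u) y).

Local Notation quasicentroid := (quasicentroid d alpha beta par br).

Lemma sgn_comp (pa pf pg : bool) :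
  sgn C (pf && addb pa pg) * sgn C (pg && pa) = sgn C (addb pf pg && pa) * sgn C (pf && pg).
Proof. by rewrite /sgn -!signr_addb; case: pa pf pg => [] [] []. Qed.

Lemma quasicentroid_comp k l s t pf pg f g pa pb a b x y z :
  quasicentroid k l pf f -> quasicentroid s t pg g -> par pa a -> par pb b ->
  ev (br (ev (f (ev (g a) y)) x) (A (k + s) (l + t) b)) (x + y + z)
  = (sgn C (addb pf pg && pa) * sgn C (pf && pg))
      *: ev (br (A (k + s) (l + t) a) (ev (g (ev (f b) x)) y)) z.
Proof.
move=> [Of Hf] [Og Hg] Ha Hb.
have Hga := omega_par (in_Omega_ev_of Og) y Ha.
have Hfb := omega_par (in_Omega_ev_of Of) x Hb.
have -> : A (k + s) (l + t) b = A k l (A s t b).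
  by rewrite abpow_comp (addnC s k) (addnC t l).
rewrite -addrA.
rewrite (Hf _ _ _ _ _ _ Hga (abpow_par s t Hb)).
rewrite -(in_Omega_abpow k l a y Og) (in_Omega_abpow s t b x Of).
rewrite (Hg _ _ _ _ _ _ (abpow_par k l Ha) Hfb).
by rewrite scalerA abpow_comp sgn_comp.
Qed.

Section Bracket.
Variables (k l s t : nat) (pf pg : bool) (f g : V -> seq V).
Hypotheses (Hf : quasicentroid k l pf f) (Hg : quasicentroid s t pg g).

Local Notation gc a x y := (gc_br_ev pf pg f g a x y).

Lemma gc_br_ev_anticentroid pa pb a b x y z :
  par pa a -> par pb b ->
  ev (br (gc a x y) (A (k + s) (l + t) b)) (y + z)
  + sgn C (addb pf pg && pa) *: ev (br (A (k + s) (l + t) a) (gc b x y)) z = 0.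
Proof.
move=> Ha Hb; set S := sgn C _; set e := sgn C (pf && pg).
have fg : ev (br (ev (f (ev (g a) (y - x))) x) (A (k + s) (l + t) b)) (y + z)
    = (S * e) *: ev (br (A (k + s) (l + t) a) (ev (g (ev (f b) x)) (y - x))) z.
  by rewrite -(quasicentroid_comp x (y - x) z Hf Hg Ha Hb) (addrC x) subrK.
have gf : ev (br (ev (g (ev (f a) x)) (y - x)) (A (k + s) (l + t) b)) (y + z)
    = (S * e) *: ev (br (A (k + s) (l + t) a) (ev (f (ev (g b) (y - x))) x)) z.
  rewrite /S /e (addbC pf) (andbC pf) (addnC k) (addnC l).
  by rewrite -(quasicentroid_comp (y - x) x z Hg Hf Ha Hb) subrK.
have e2 : e * e = 1 by rewrite /e /sgn -signr_addb addbb.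
rewrite /gc_br_ev -/e (linmapB (Hbrl _ _)) (linmapZ (Hbrl _ _)) fg gf.
rewrite (linmapB (Hbrr _ _)) (linmapZ (Hbrr _ _)) scalerBr !scalerA.
by rewrite -/e mulrCA e2 mulr1 addrA subrK subrr.
Qed.

Lemma gc_br_ev_polyfun a :
  exists N, forall b0 b1 c0 c1, polyfun N (fun w => gc a (b0 + b1 * w) (c0 + c1 * w)).
Proof.
have [N1 HN1] := polyfun_ev_comp (g a) (omega_lin (in_Omega_ev_of Hf.1)).
have [N2 HN2] := polyfun_ev_comp (f a) (omega_lin (in_Omega_ev_of Hg.1)).
exists (maxn N1 N2) => b0 b1 c0 c1.
have diff w : c0 + c1 * w - (b0 + b1 * w) = c0 - b0 + (c1 - b1) * w.
  by rewrite mulrBl opprD addrACA.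
apply: polyfun_eq (polyfunD (polyfunW (leq_maxl N1 N2) (HN1 _ _ b0 b1))
  (polyfunZ (- sgn C (pf && pg)) (polyfunW (leq_maxr N1 N2) (HN2 b0 b1 _ _)))) _.
by move=> w; rewrite /gc_br_ev diff scaleNr.
Qed.

Local Notation gcP := (fun x a y => gc a x y).

Lemma gc_br_ev_in_Omega_ev x : in_Omega_ev (addb pf pg) (gcP x).
Proof. exact: in_Omega_ev_gc_br x Hf.1 Hg.1. Qed.

Lemma gc_br_ev_is_polyfun x a : is_polyfun (gcP x a).
Proof.
have [N HN] := gc_br_ev_polyfun a; exists N.
by apply: polyfun_eq (HN x 0 0 1) _ => y; rewrite mul0r addr0 add0r mul1r.
Qed.

Lemma gc_br_ev_degree_bound :
  fin_gen d -> exists N, forall a y, polyfun N (fun x => gc a x y).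
Proof.
move=> Hfg; apply: fin_gen_polyfun_bound gc_br_ev_in_Omega_ev Hfg _ => v.
have [N HN] := gc_br_ev_polyfun v; exists N => y.
by apply: polyfun_eq (HN 0 1 y 0) _ => x; rewrite mul0r addr0 add0r mul1r.
Qed.

Lemma gen_der_coef_map N i :
  gen_der d alpha beta par br (k + s) (l + t) (addb pf pg) (coef_map gcP N i).
Proof.
have HPy := gc_br_ev_is_polyfun.
have Hh := in_Omega_coef_map gc_br_ev_in_Omega_ev HPy N i.
split => //; exists (coef_map gcP N i), (fun _ => [::]); split => //.
  exact: in_Omega_nil.
move=> pa pb a b x y Ha Hb; rewrite ev_nil !(ev_coef_map HPy).
rewrite -(interp_coef_linmap _ _ _ (Hbrl _ _)) -(interp_coef_linmap _ _ _ (Hbrr _ _)).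
rewrite addrC -interp_coefZD; apply: interp_coef_eq0 => lam.
by rewrite addrC; apply: gc_br_ev_anticentroid Ha Hb.
Qed.

Lemma gc_br_ev_expansion :
  fin_gen d ->
  exists (n : nat) (h : nat -> V -> seq V),
    (forall i, (i < n)%N ->
       gen_der d alpha beta par br (k + s) (l + t) (addb pf pg) (h i)) /\
    (forall a x y, gc a x y = \sum_(i < n) x ^+ i *: ev (h i a) y).
Proof.
move=> /gc_br_ev_degree_bound[N HN]; exists N, (coef_map gcP N).
split=> [i _|a x y]; first exact: gen_der_coef_map.
exact: (polyfun_coef_map gc_br_ev_is_polyfun a x y HN).
Qed.

End Bracket.

End Quasicentroids.

End Omega.

Theorem mainTheorem13 (R : realType) (V : lmodType R[i])
  (d alpha beta : V -> V) (par : bool -> V -> Prop) (br : V -> V -> seq V)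
  (HR : isBiHomLCSA d alpha beta par br) (Hfg : fin_gen d)
  (k l s t : nat) (pf pg : bool) (f g : V -> seq V)
  (Hf : quasicentroid d alpha beta par br k l pf f)
  (Hg : quasicentroid d alpha beta par br s t pg g) :
  exists (n : nat) (h : nat -> V -> seq V),
    (forall i, (i < n)%N ->
       gen_der d alpha beta par br (k + s) (l + t) (addb pf pg) (h i)) /\
    (forall a x y, gc_br_ev pf pg f g a x y = \sum_(i < n) x ^+ i *: ev (h i a) y).
Proof.
have brl z y : linmap (fun u => ev (br u z) y) by move=> c u v; apply: (bh_brl HR).
have brr z y : linmap (fun u => ev (br z u) y) by move=> c u v; apply: (bh_brr HR).
exact: (gc_br_ev_expansion (bh_graded HR) (bh_d HR).1 (bh_alpha HR) (bh_beta HR)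
          (bh_ab HR) brl brr Hf Hg Hfg).
Qed.
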